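(* Let $m>0$ and let $U_0=\frac12\ln(1-\frac{2m}{r})$, expressed in Weyl coordinates via $\rho=r\sin\theta\sqrt{1-2m/r}$, $z=(r-m)\cos\theta$ ($r>2m$, $\theta\in[0,\pi]$), and set $x=r/m-1$. Let the body surface be $r=r_0>2m$, i.e. $x_0=r_0/m-1$, so that $z_S=-mx_0$, $z_N=mx_0$. Then for every $y\in(-mx_0,mx_0)$ the unique solution $Z_y$ of $dZ_y=\cos\Upsilon_y\,dU_0+\sin\Upsilon_y\star dU_0$ on the exterior region $x>x_0$ vanishing at infinity is given by $$e^{-Z_y}=\frac{yx-m\cos\theta-\sqrt{m^2x^2+y^2-2mxy\cos\theta-m^2\sin^2\theta}}{(y-m)\sqrt{x^2-1}}$$ (with the limiting value obtained by continuity at $y=m$), and hence $$\Psi_y=\frac{\big(yx-m\cos\theta-\sqrt{m^2x^2+y^2-2mxy\cos\theta-m^2\sin^2\theta}\big)^2}{(y-m)^2(x+1)^2\sqrt{m^2x^2+y^2-2mxy\cos\theta-m^2\sin^2\theta}},\qquad \psi_y=\frac{1}{\sqrt{m^2x^2+y^2-2mxy\cos\theta-m^2\sin^2\theta}}.$$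
   Context: $\mathbb{E}^3$ has cylindrical (Weyl) coordinates $(\rho,z,\phi)$ and flat metric $\gamma=d\rho^2+dz^2+\rho^2d\phi^2$. On the half-plane $\mathbb{K}=\{(\rho,z):\rho\ge0\}$ with metric $d\rho^2+dz^2$, the Hodge star is fixed by $\star d\rho=-dz$, $\star dz=d\rho$. For a constant $y$, $\Upsilon_y\in[0,2\pi)$ is defined by $\cos\Upsilon_y=(z-y)/\sqrt{\rho^2+(z-y)^2}$, $\sin\Upsilon_y=\rho/\sqrt{\rho^2+(z-y)^2}$; $\psi_y=1/\sqrt{\rho^2+(z-y)^2}$ and $\Psi_y=e^{2U_0-2Z_y}/\sqrt{\rho^2+(z-y)^2}$. *)

From Stdlib Require Import Reals Lra.
From Coquelicot Require Import Coquelicot.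
Open Scope R_scope.

Definition weyl_rho (m r th : R) : R := r * sin th * sqrt (1 - 2 * m / r).
Definition weyl_z (m r th : R) : R := (r - m) * cos th.

Definition exterior (m r0 rho z : R) : Prop :=
  exists r th, r0 < r /\ 0 <= th <= PI /\ rho = weyl_rho m r th /\ z = weyl_z m r th.

(* Distance to the axis point (0,y), and Upsilon_y via its cosine and sine. *)
Definition dist_y (y rho z : R) : R := sqrt (rho ^ 2 + (z - y) ^ 2).
Definition cosUps (y rho z : R) : R := (z - y) / dist_y y rho z.
Definition sinUps (y rho z : R) : R := rho / dist_y y rho z.

(* 1-forms on K:  (a, b) stands for a d rho + b dz. *)
Definition form := (R * R)%type.
Definition dfun (f : R -> R -> R) (rho z : R) : form :=
  (Derive (fun s => f s z) rho, Derive (fun t => f rho t) z).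
(* Hodge star with  *d rho = - dz,  *dz = d rho :  *(a drho + b dz) = b drho - a dz *)
Definition hstar (w : form) : form := (snd w, - fst w).
Definition fadd (w1 w2 : form) : form := (fst w1 + fst w2, snd w1 + snd w2).
Definition fscal (c : R) (w : form) : form := (c * fst w, c * snd w).

Definition is_Zsol (m r0 : R) (U0 : R -> R -> R) (y : R) (Z : R -> R -> R) : Prop :=
  (forall rho z, exterior m r0 rho z -> 0 < rho ->
     let w := fadd (fscal (cosUps y rho z) (dfun U0 rho z))
                   (fscal (sinUps y rho z) (hstar (dfun U0 rho z))) in
     is_derive (fun s => Z s z) rho (fst w) /\
     is_derive (fun t => Z rho t) z (snd w)) /\
  (forall eps, 0 < eps -> exists M, forall rho z, exterior m r0 rho z ->
     M < rho ^ 2 + z ^ 2 -> Rabs (Z rho z) < eps).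

Definition Psi (U0 Z : R -> R -> R) (y rho z : R) : R :=
  exp (2 * U0 rho z - 2 * Z rho z) / dist_y y rho z.
Definition psi (y rho z : R) : R := 1 / dist_y y rho z.

Definition Dxy (m y x th : R) : R :=
  sqrt (m ^ 2 * x ^ 2 + y ^ 2 - 2 * m * x * y * cos th - m ^ 2 * (sin th) ^ 2).
Definition Nxy (m y x th : R) : R := y * x - m * cos th - Dxy m y x th.
Definition eZ_formula (m y x th : R) : R :=
  Nxy m y x th / ((y - m) * sqrt (x ^ 2 - 1)).
Definition Psi_formula (m y x th : R) : R :=
  (Nxy m y x th) ^ 2 / ((y - m) ^ 2 * (x + 1) ^ 2 * Dxy m y x th).
Definition psi_formula (m y x th : R) : R := 1 / Dxy m y x th.

(* Work in prolate spheroidal coordinates X = (a + b) / 2m, C = (a - b) / 2m, where a and b are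
   the distances to the foci (0, -m) and (0, m): the Weyl point of (r, theta) has X = r/m - 1 and
   C = cos theta, and U0 = 1/2 ln ((X - 1) / (X + 1)).  Take Z := - ln G, with G the claimed
   expression for exp (- Z_y).  Along each coordinate direction, dZ = cos Ups dU0 + sin Ups *dU0
   is a rational identity in a, b and the distance d to (0, y), valid modulo the three relations
   a^2 = rho^2 + (z + m)^2, b^2 = rho^2 + (z - m)^2, d^2 = rho^2 + (z - y)^2; and G - 1 = O(1/X),
   so Z vanishes at infinity.  Two solutions differ by a function with vanishing gradient on the
   exterior region; any two of its points are joined inside it by two horizontal segments and a
   far vertical one, so the difference is constant, and zero by the decay.  At y = m the formula is 0/0;
   rationalised, G = (y + m) sqrt (X^2 - 1) / (y X - m C + d), which is continuous in y. *)

From Stdlib Require Import Reals Lra Nsatz.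
From Coquelicot Require Import Coquelicot.
Open Scope R_scope.

Lemma pow2_eq_nonneg u v : 0 <= u -> 0 <= v -> u ^ 2 = v ^ 2 -> u = v.
Proof. intros hu hv h; rewrite <- (sqrt_pow2 u hu), <- (sqrt_pow2 v hv), h; reflexivity. Qed.

Lemma ln_sqrt x : 0 < x -> ln (sqrt x) = / 2 * ln x.
Proof.
  intros hx; rewrite <- (pow2_sqrt x) at 2 by lra.
  rewrite ln_pow by (apply sqrt_lt_R0; lra); simpl; field.
Qed.

Lemma cos_open_bound th : 0 < th < PI -> -1 < cos th < 1.
Proof.
  intros hth; pose proof (sin_gt_0 th (proj1 hth) (proj2 hth)).
  pose proof (sin2_cos2 th) as h; unfold Rsqr in h; split; nra.
Qed.

Lemma sqrt_X2_pos X : 1 < X -> 0 < sqrt (X ^ 2 - 1).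
Proof. intros hX; apply sqrt_lt_R0; nra. Qed.

Lemma sqrt_X2_bounds X : 1 < X -> X - 1 <= sqrt (X ^ 2 - 1) <= X.
Proof.
  intros hX; pose proof (pow2_sqrt (X ^ 2 - 1) ltac:(nra)); pose proof (sqrt_pos (X ^ 2 - 1)).
  split; nra.
Qed.

Lemma Rabs_div_le u v A B : Rabs u <= A -> 0 < B <= Rabs v -> Rabs (u / v) <= A / B.
Proof.
  intros hu hv; assert (v <> 0) by (intro e; rewrite e, Rabs_R0 in hv; lra).
  rewrite Rabs_div by assumption; apply Rmult_le_compat.
  - apply Rabs_pos.
  - left; apply Rinv_0_lt_compat; lra.
  - exact hu.
  - apply Rinv_le_contravar; apply hv.
Qed.

Lemma ln_near_1 eps : 0 < eps -> exists delta, 0 < delta /\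
  forall g, Rabs (g - 1) < delta -> Rabs (ln g) < eps.
Proof.
  intros he; exists (1 - exp (- eps)); split.
  { pose proof (exp_increasing (- eps) 0 ltac:(lra)); rewrite exp_0 in *; lra. }
  intros g hg; apply Rabs_def2 in hg.
  assert (hinv : exp eps * exp (- eps) = 1) by (rewrite <- exp_plus, Rplus_opp_r; apply exp_0).
  pose proof (exp_pos eps); pose proof (exp_pos (- eps)).
  assert (l1 : ln (exp (- eps)) < ln g) by (apply ln_increasing; lra).
  assert (l2 : ln g < ln (exp eps)) by (apply ln_increasing; nra).
  rewrite ln_exp in l1, l2; apply Rabs_def1; lra.
Qed.

(* [auto_derive] leaves the derivatives of abstract functions eta-expanded. *)
Lemma Derive_eta (f : R -> R) (t l : R) : is_derive f t l -> Derive (fun s => f s) t = l.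
Proof. apply is_derive_unique. Qed.

Lemma continuity_pt_ex_derive (f : R -> R) x : ex_derive f x -> continuity_pt f x.
Proof. intros h; apply derivable_continuous_pt, ex_derive_Reals_0, h. Qed.

Lemma const_of_derive_0 (f : R -> R) a b :
  (forall x, Rmin a b <= x <= Rmax a b -> is_derive f x 0) -> f a = f b.
Proof.
  intros hf; destruct (MVT_gen f a b (fun _ => 0)) as (c & _ & e).
  - intros x hx; apply hf; lra.
  - intros x hx; apply continuity_pt_ex_derive; exists 0; apply hf, hx.
  - lra.
Qed.

Lemma is_derive_sub_eq (f g : R -> R) (x l : R) :
  is_derive f x l -> is_derive g x l -> is_derive (fun t => f t - g t) x 0.
Proof.
  intros hf hg; pose proof (is_derive_minus f g x l l hf hg) as h.
  rewrite minus_eq_zero in h; exact h.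
Qed.

(** * Distances to points of the axis *)

Lemma dist_y_sq y rho z : dist_y y rho z ^ 2 = rho ^ 2 + (z - y) ^ 2.
Proof. apply pow2_sqrt, Rplus_le_le_0_compat; apply pow2_ge_0. Qed.

Lemma dist_y_pos y rho z : 0 < rho -> 0 < dist_y y rho z.
Proof. intros; apply sqrt_lt_R0; pose proof (pow2_ge_0 (z - y)); nra. Qed.

Lemma dist_y_gt_abs y rho z : 0 < rho -> Rabs (z - y) < dist_y y rho z.
Proof.
  intros hrho; pose proof (dist_y_sq y rho z); pose proof (dist_y_pos y rho z hrho).
  apply Rabs_def1; nra.
Qed.

Lemma dist_y_sum_gt y1 y2 rho z : 0 < rho ->
  Rabs (y1 - y2) < dist_y y1 rho z + dist_y y2 rho z.
Proof.
  intros hrho.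
  pose proof (dist_y_gt_abs y1 rho z hrho); pose proof (dist_y_gt_abs y2 rho z hrho).
  replace (y1 - y2) with ((y1 - z) + (z - y2)) by ring.
  pose proof (Rabs_triang (y1 - z) (z - y2)); rewrite (Rabs_minus_sym y1) in *; lra.
Qed.

Lemma dist_y_diff_le y1 y2 rho z :
  Rabs (dist_y y1 rho z - dist_y y2 rho z) <= Rabs (y1 - y2).
Proof.
  pose proof (dist_y_sq y1 rho z) as h1; pose proof (dist_y_sq y2 rho z) as h2.
  pose proof (sqrt_pos (rho ^ 2 + (z - y1) ^ 2)); pose proof (sqrt_pos (rho ^ 2 + (z - y2) ^ 2)).
  fold (dist_y y1 rho z) (dist_y y2 rho z) in *.
  set (d1 := dist_y y1 rho z) in *; set (d2 := dist_y y2 rho z) in *.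
  (* Cauchy-Schwarz *)
  assert (hcs : rho ^ 2 + (z - y1) * (z - y2) <= d1 * d2).
  { assert ((rho ^ 2 + (z - y1) * (z - y2)) ^ 2 <= (d1 * d2) ^ 2).
    { rewrite Rpow_mult_distr, h1, h2; pose proof (pow2_ge_0 (rho * (y1 - y2))); nra. }
    apply Rsqr_incr_0_var; unfold Rsqr; nra. }
  apply Rsqr_le_abs_0; unfold Rsqr; nra.
Qed.

Lemma dist_y_ge_rho y rho z : 0 <= rho -> rho <= dist_y y rho z.
Proof.
  intros h; rewrite <- (sqrt_pow2 rho h) at 1; apply sqrt_le_1_alt.
  pose proof (pow2_ge_0 (z - y)); lra.
Qed.

Lemma dist_y_le_mono y rho rho' z : 0 <= rho <= rho' -> dist_y y rho z <= dist_y y rho' z.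
Proof. intros h; apply sqrt_le_1_alt; nra. Qed.

Lemma is_derive_dist_y_rho y rho z : 0 < rho ->
  is_derive (fun s => dist_y y s z) rho (rho / dist_y y rho z).
Proof.
  intros hrho; pose proof (dist_y_pos y rho z hrho) as hd; unfold dist_y in *.
  auto_derive; replace (rho * (rho * 1) + (z - y) * ((z - y) * 1))
    with (rho ^ 2 + (z - y) ^ 2) by ring; [pose proof (pow2_ge_0 (z - y)); nra | field; lra].
Qed.

Lemma is_derive_dist_y_z y rho z : 0 < rho ->
  is_derive (fun t => dist_y y rho t) z ((z - y) / dist_y y rho z).
Proof.
  intros hrho; pose proof (dist_y_pos y rho z hrho) as hd; unfold dist_y in *.
  auto_derive; replace (rho * (rho * 1) + (z + - y) * ((z + - y) * 1))
    with (rho ^ 2 + (z - y) ^ 2) by ring; [pose proof (pow2_ge_0 (z - y)); nra | field; lra].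
Qed.

(** * Prolate spheroidal coordinates *)

Definition prolate_X (m rho z : R) : R := (dist_y (- m) rho z + dist_y m rho z) / (2 * m).
Definition prolate_C (m rho z : R) : R := (dist_y (- m) rho z - dist_y m rho z) / (2 * m).

Lemma focal_sum_gt m rho z : 0 < m -> 0 < rho -> 2 * m < dist_y (- m) rho z + dist_y m rho z.
Proof.
  intros hm hrho; pose proof (dist_y_sum_gt (- m) m rho z hrho) as h.
  rewrite Rabs_left in h by lra; lra.
Qed.

Lemma prolate_X_gt_1 m rho z : 0 < m -> 0 < rho -> 1 < prolate_X m rho z.
Proof.
  intros hm hrho; pose proof (focal_sum_gt m rho z hm hrho).
  unfold prolate_X; apply (Rmult_lt_reg_r (2 * m)); [lra|]; field_simplify; lra.
Qed.

Lemma prolate_C_bound m rho z : 0 < m -> -1 <= prolate_C m rho z <= 1.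
Proof.
  intros hm; pose proof (dist_y_diff_le (- m) m rho z) as h.
  rewrite (Rabs_left (- m - m)) in h by lra; apply Rabs_le_between' in h.
  unfold prolate_C; split; apply (Rmult_le_reg_r (2 * m)); try lra; field_simplify; lra.
Qed.

Lemma prolate_z m rho z : 0 < m -> z = m * prolate_X m rho z * prolate_C m rho z.
Proof.
  intros hm; pose proof (dist_y_sq (- m) rho z); pose proof (dist_y_sq m rho z).
  unfold prolate_X, prolate_C; field_simplify_eq; [|lra].
  nra.
Qed.

Lemma prolate_rho_sq m rho z : 0 < m ->
  rho ^ 2 = m ^ 2 * (prolate_X m rho z ^ 2 - 1) * (1 - prolate_C m rho z ^ 2).
Proof.
  intros hm; pose proof (dist_y_sq (- m) rho z) as ha; pose proof (dist_y_sq m rho z) as hb.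
  unfold prolate_X, prolate_C; field_simplify_eq; [|lra].
  clear hm; cbn [pow] in *; nsatz.
Qed.

Definition prolate_dist (m y X C : R) : R :=
  sqrt (m ^ 2 * X ^ 2 + y ^ 2 - 2 * m * X * y * C - m ^ 2 * (1 - C ^ 2)).

Lemma dist_y_prolate m y rho z : 0 < m ->
  dist_y y rho z = prolate_dist m y (prolate_X m rho z) (prolate_C m rho z).
Proof.
  intros hm; pose proof (dist_y_sq (- m) rho z) as ha; pose proof (dist_y_sq m rho z) as hb.
  unfold prolate_dist at 1, dist_y at 1; f_equal.
  unfold prolate_X, prolate_C; field_simplify_eq; [|lra].
  clear hm; cbn [pow] in *; nsatz.
Qed.

Lemma prolate_dist_sq m y X C : 1 <= X -> -1 <= C <= 1 ->
  prolate_dist m y X C ^ 2 = m ^ 2 * X ^ 2 + y ^ 2 - 2 * m * X * y * C - m ^ 2 * (1 - C ^ 2).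
Proof.
  intros hX hC; apply pow2_sqrt.
  replace (m ^ 2 * X ^ 2 + y ^ 2 - 2 * m * X * y * C - m ^ 2 * (1 - C ^ 2))
    with ((m * X * C - y) ^ 2 + m ^ 2 * ((X ^ 2 - 1) * (1 - C ^ 2))) by ring.
  apply Rplus_le_le_0_compat; [apply pow2_ge_0|].
  apply Rmult_le_pos; [apply pow2_ge_0|]; apply Rmult_le_pos; nra.
Qed.

Lemma prolate_dist_foci m X C : 0 < m -> 1 <= X -> -1 <= C <= 1 ->
  prolate_dist m (- m) X C = m * (X + C) /\ prolate_dist m m X C = m * (X - C).
Proof.
  intros hm hX hC; unfold prolate_dist; split; rewrite <- sqrt_pow2 by nra; f_equal; ring.
Qed.

Lemma one_sub_2m_div_pos m r : 0 < m -> 2 * m < r -> 0 < 1 - 2 * m / r.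
Proof.
  intros hm hr; assert (2 * m / r < 1) by (apply (Rmult_lt_reg_r r); [lra|]; field_simplify; lra).
  lra.
Qed.

Lemma weyl_rho_sq m r th : 0 < m -> 2 * m < r ->
  weyl_rho m r th ^ 2 = r * (r - 2 * m) * sin th ^ 2.
Proof.
  intros hm hr; unfold weyl_rho.
  rewrite !Rpow_mult_distr, pow2_sqrt by (pose proof (one_sub_2m_div_pos m r hm hr); lra).
  field; lra.
Qed.

Lemma Dxy_prolate m y x th : Dxy m y x th = prolate_dist m y x (cos th).
Proof.
  pose proof (sin2_cos2 th) as h; unfold Rsqr in h.
  unfold Dxy, prolate_dist; replace (sin th ^ 2) with (1 - cos th ^ 2) by (simpl; lra).
  reflexivity.
Qed.

Lemma dist_y_weyl m y r th : 0 < m -> 2 * m < r ->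
  dist_y y (weyl_rho m r th) (weyl_z m r th) = Dxy m y (r / m - 1) th.
Proof.
  intros hm hr; unfold dist_y, Dxy; f_equal.
  rewrite weyl_rho_sq by assumption; unfold weyl_z.
  pose proof (sin2_cos2 th) as h; unfold Rsqr in h.
  replace (sin th ^ 2) with (1 - cos th ^ 2) by (simpl; lra); field; lra.
Qed.

Lemma prolate_weyl m r th : 0 < m -> 2 * m < r ->
  prolate_X m (weyl_rho m r th) (weyl_z m r th) = r / m - 1 /\
  prolate_C m (weyl_rho m r th) (weyl_z m r th) = cos th.
Proof.
  intros hm hr.
  assert (hx : 1 <= r / m - 1) by (apply (Rmult_le_reg_r m); [lra|]; field_simplify; lra).
  destruct (prolate_dist_foci m (r / m - 1) (cos th) hm hx (COS_bound th)) as [ha hb].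
  unfold prolate_X, prolate_C; rewrite !dist_y_weyl, !Dxy_prolate, ha, hb by assumption.
  split; field; lra.
Qed.

Lemma weyl_prolate m rho z : 0 < m -> 0 < rho ->
  weyl_rho m (m * (prolate_X m rho z + 1)) (acos (prolate_C m rho z)) = rho /\
  weyl_z m (m * (prolate_X m rho z + 1)) (acos (prolate_C m rho z)) = z.
Proof.
  intros hm hrho.
  pose proof (prolate_X_gt_1 m rho z hm hrho) as hX; pose proof (prolate_C_bound m rho z hm) as hC.
  pose proof (prolate_z m rho z hm) as hz; pose proof (prolate_rho_sq m rho z hm) as hrho2.
  set (X := prolate_X m rho z) in *; set (C := prolate_C m rho z) in *.
  assert (hr : 2 * m < m * (X + 1)) by nra.
  split.
  - apply pow2_eq_nonneg; [| lra |].
    + unfold weyl_rho; rewrite sin_acos by assumption.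
      apply Rmult_le_pos; [apply Rmult_le_pos; [nra | apply sqrt_pos] | apply sqrt_pos].
    + rewrite weyl_rho_sq, sin_acos, pow2_sqrt by (unfold Rsqr; nra).
      rewrite hrho2; unfold Rsqr; ring.
  - unfold weyl_z; rewrite cos_acos by assumption; rewrite hz; ring.
Qed.

Lemma weyl_rho_pos m r th : 0 < m -> 2 * m < r -> 0 < th < PI -> 0 < weyl_rho m r th.
Proof.
  intros hm hr hth; unfold weyl_rho.
  pose proof (sin_gt_0 th (proj1 hth) (proj2 hth)).
  pose proof (sqrt_lt_R0 _ (one_sub_2m_div_pos m r hm hr)).
  apply Rmult_lt_0_compat; [apply Rmult_lt_0_compat|]; lra.
Qed.

Lemma weyl_norm_sq_le m r th : 0 < m -> 2 * m < r ->
  weyl_rho m r th ^ 2 + weyl_z m r th ^ 2 <= (r - m) ^ 2.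
Proof.
  intros hm hr; rewrite weyl_rho_sq by assumption; unfold weyl_z.
  pose proof (sin2_cos2 th) as h; unfold Rsqr in h.
  rewrite Rpow_mult_distr; replace (cos th ^ 2) with (1 - sin th ^ 2) by (simpl; lra).
  pose proof (pow2_ge_0 (m * sin th)); nra.
Qed.

Lemma exterior_iff m r0 rho z : 0 < m -> 2 * m < r0 -> 0 < rho ->
  exterior m r0 rho z <-> r0 < m * (prolate_X m rho z + 1).
Proof.
  intros hm hr0 hrho; split.
  - intros (r & th & hr & _ & -> & ->).
    destruct (prolate_weyl m r th hm ltac:(lra)) as [-> _].
    replace (m * (r / m - 1 + 1)) with r by (field; lra); exact hr.
  - intros hr; destruct (weyl_prolate m rho z hm hrho) as [hw1 hw2].
    exists (m * (prolate_X m rho z + 1)), (acos (prolate_C m rho z)).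
    repeat split; try lra; apply acos_bound.
Qed.

Lemma U0_prolate m U0 rho z : 0 < m ->
  (forall r th, 2 * m < r -> 0 <= th <= PI ->
     U0 (weyl_rho m r th) (weyl_z m r th) = / 2 * ln (1 - 2 * m / r)) ->
  0 < rho ->
  U0 rho z = / 2 * ln ((prolate_X m rho z - 1) / (prolate_X m rho z + 1)).
Proof.
  intros hm hU hrho; destruct (weyl_prolate m rho z hm hrho) as [hw1 hw2].
  pose proof (prolate_X_gt_1 m rho z hm hrho) as hX.
  transitivity (U0 (weyl_rho m (m * (prolate_X m rho z + 1)) (acos (prolate_C m rho z)))
                  (weyl_z m (m * (prolate_X m rho z + 1)) (acos (prolate_C m rho z)))).
  { rewrite hw1, hw2; reflexivity. }
  rewrite hU by (try apply acos_bound; nra).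
  do 2 f_equal; field; lra.
Qed.

(** * The candidate solution *)

Lemma prolate_dist_conj m y X C : 1 <= X -> -1 <= C <= 1 ->
  prolate_dist m y X C ^ 2 - (y * X - m * C) ^ 2 = (m ^ 2 - y ^ 2) * (X ^ 2 - 1).
Proof. intros hX hC; rewrite prolate_dist_sq by assumption; ring. Qed.

Lemma prolate_dist_pos m y X C : 0 < m -> 1 < X -> -1 < C < 1 -> 0 < prolate_dist m y X C.
Proof.
  intros hm hX hC; apply sqrt_lt_R0.
  replace (m ^ 2 * X ^ 2 + y ^ 2 - 2 * m * X * y * C - m ^ 2 * (1 - C ^ 2))
    with ((m * X * C - y) ^ 2 + m ^ 2 * ((X ^ 2 - 1) * (1 - C ^ 2))) by ring.
  pose proof (pow2_ge_0 (m * X * C - y)).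
  assert (0 < m ^ 2 * ((X ^ 2 - 1) * (1 - C ^ 2)))
    by (apply Rmult_lt_0_compat; [nra | apply Rmult_lt_0_compat; nra]).
  lra.
Qed.

Lemma eZ_numer_div_pos m y X C : 0 < m -> 1 < X -> -1 <= C <= 1 -> y <> m ->
  0 < (y * X - m * C - prolate_dist m y X C) / (y - m).
Proof.
  intros hm hX hC hy.
  pose proof (prolate_dist_conj m y X C ltac:(lra) hC) as hconj.
  pose proof (sqrt_pos (m ^ 2 * X ^ 2 + y ^ 2 - 2 * m * X * y * C - m ^ 2 * (1 - C ^ 2))) as hD.
  fold (prolate_dist m y X C) in hD |- *; set (D := prolate_dist m y X C) in *.
  assert (hX2 : 0 < X ^ 2 - 1) by nra.
  destruct (Rlt_dec m y) as [hgt | hle].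
  - apply Rdiv_lt_0_compat; [|lra].
    assert (0 < y * X - m * C) by nra.
    assert (0 < (y ^ 2 - m ^ 2) * (X ^ 2 - 1)) by (apply Rmult_lt_0_compat; nra).
    nra.
  - assert (y * X - m * C - D < 0).
    { destruct (Rle_dec y (- m)); [nra|].
      assert (0 < (m ^ 2 - y ^ 2) * (X ^ 2 - 1)) by (apply Rmult_lt_0_compat; nra).
      nra. }
    replace ((y * X - m * C - D) / (y - m)) with ((- (y * X - m * C - D)) / (m - y))
      by (field; lra).
    apply Rdiv_lt_0_compat; lra.
Qed.

Lemma eZ_conj_denom_pos m y X C : 0 < m -> 1 < X -> -1 <= C <= 1 -> - m < y ->
  0 < y * X - m * C + prolate_dist m y X C.
Proof.
  intros hm hX hC hy.
  pose proof (prolate_dist_conj m y X C ltac:(lra) hC) as hconj.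
  pose proof (sqrt_pos (m ^ 2 * X ^ 2 + y ^ 2 - 2 * m * X * y * C - m ^ 2 * (1 - C ^ 2))) as hD.
  fold (prolate_dist m y X C) in hD |- *; set (D := prolate_dist m y X C) in *.
  destruct (Rlt_dec y m).
  - assert (0 < (m ^ 2 - y ^ 2) * (X ^ 2 - 1)) by (apply Rmult_lt_0_compat; nra).
    nra.
  - nra.
Qed.

(* The value of [exp (- Z_y)] at the point with prolate coordinates (X, C); the
   branch [y = m] is the continuous extension of the other one. *)
Definition eZ_prolate (m y X C : R) : R :=
  if Req_dec_T y m then sqrt (X ^ 2 - 1) / (X - C)
  else (y * X - m * C - prolate_dist m y X C) / ((y - m) * sqrt (X ^ 2 - 1)).

Lemma eZ_prolate_pos m y X C : 0 < m -> 1 < X -> -1 <= C <= 1 -> 0 < eZ_prolate m y X C.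
Proof.
  intros hm hX hC; pose proof (sqrt_X2_pos X hX).
  unfold eZ_prolate; destruct (Req_dec_T y m) as [_ | hy].
  - apply Rdiv_lt_0_compat; lra.
  - pose proof (eZ_numer_div_pos m y X C hm hX hC hy).
    replace (_ / _) with ((y * X - m * C - prolate_dist m y X C) / (y - m) / sqrt (X ^ 2 - 1))
      by (field; lra).
    apply Rdiv_lt_0_compat; lra.
Qed.

Lemma eZ_prolate_conj m y X C : 0 < m -> 1 < X -> -1 <= C <= 1 -> - m < y ->
  eZ_prolate m y X C = (y + m) * sqrt (X ^ 2 - 1) / (y * X - m * C + prolate_dist m y X C).
Proof.
  intros hm hX hC hy.
  pose proof (eZ_conj_denom_pos m y X C hm hX hC hy) as hQ.
  pose proof (sqrt_X2_pos X hX) as hs; pose proof (pow2_sqrt (X ^ 2 - 1) ltac:(nra)) as hs2.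
  unfold eZ_prolate; destruct (Req_dec_T y m) as [-> | hym].
  - rewrite (proj2 (prolate_dist_foci m X C hm ltac:(lra) hC)); field; repeat split; nra.
  - pose proof (prolate_dist_conj m y X C ltac:(lra) hC) as hconj.
    set (D := prolate_dist m y X C) in *; set (s := sqrt (X ^ 2 - 1)) in *.
    field_simplify_eq; [nra | lra].
Qed.

Definition Z_prolate (m y rho z : R) : R :=
  - ln (eZ_prolate m y (prolate_X m rho z) (prolate_C m rho z)).

Lemma Z_prolate_split m y rho z : 0 < m -> 0 < rho -> y <> m ->
  Z_prolate m y rho z =
  - ln ((y * prolate_X m rho z - m * prolate_C m rho z - dist_y y rho z) / (y - m))
  + / 2 * ln (prolate_X m rho z ^ 2 - 1).
Proof.
  intros hm hrho hy.
  pose proof (prolate_X_gt_1 m rho z hm hrho) as hX; pose proof (prolate_C_bound m rho z hm) as hC.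
  pose proof (eZ_numer_div_pos m y _ _ hm hX hC hy) as hN.
  pose proof (sqrt_X2_pos _ hX) as hs.
  unfold Z_prolate, eZ_prolate; destruct (Req_dec_T y m) as [e | _]; [contradiction|].
  rewrite (dist_y_prolate m y rho z hm).
  set (X := prolate_X m rho z) in *; set (C := prolate_C m rho z) in *.
  replace (_ / _) with ((y * X - m * C - prolate_dist m y X C) / (y - m) * / sqrt (X ^ 2 - 1))
    by (field; lra).
  rewrite ln_mult, ln_Rinv, ln_sqrt by (try apply Rinv_0_lt_compat; nra).
  field.
Qed.

Lemma Z_prolate_split_focus m rho z : 0 < m -> 0 < rho ->
  Z_prolate m m rho z =
  - / 2 * ln (prolate_X m rho z ^ 2 - 1) + ln (prolate_X m rho z - prolate_C m rho z).
Proof.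
  intros hm hrho.
  pose proof (prolate_X_gt_1 m rho z hm hrho) as hX; pose proof (prolate_C_bound m rho z hm) as hC.
  pose proof (sqrt_X2_pos _ hX) as hs.
  unfold Z_prolate, eZ_prolate; destruct (Req_dec_T m m) as [_ | n]; [|contradiction].
  set (X := prolate_X m rho z) in *; set (C := prolate_C m rho z) in *.
  unfold Rdiv; rewrite ln_mult, ln_Rinv, ln_sqrt by (try apply Rinv_0_lt_compat; nra).
  field.
Qed.

Lemma is_derive_half_sum_diff (A B : R -> R) (m t A' B' : R) : 0 < m ->
  is_derive A t A' -> is_derive B t B' ->
  is_derive (fun s => (A s + B s) / (2 * m)) t ((A' + B') / (2 * m)) /\
  is_derive (fun s => (A s - B s) / (2 * m)) t ((A' - B') / (2 * m)).
Proof.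
  intros hm hA hB.
  split; auto_derive; try (repeat split; eexists; eassumption);
    rewrite (Derive_eta _ _ _ hA), (Derive_eta _ _ _ hB); field; lra.
Qed.

Lemma is_derive_half_ln_ratio (X : R -> R) (t X' : R) : is_derive X t X' -> 1 < X t ->
  is_derive (fun s => / 2 * ln ((X s - 1) / (X s + 1))) t (X' / (X t ^ 2 - 1)).
Proof.
  intros hX hX1; auto_derive.
  - repeat split; try (eexists; eassumption); try lra.
    apply Rmult_lt_0_compat; [lra | apply Rinv_0_lt_compat; lra].
  - rewrite (Derive_eta _ _ _ hX); field; repeat split; nra.
Qed.

Lemma is_derive_Z_shape (X C D : R -> R) (m y t X' C' D' : R) :
  is_derive X t X' -> is_derive C t C' -> is_derive D t D' -> 1 < X t ->
  0 < (y * X t - m * C t - D t) / (y - m) ->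
  is_derive (fun s => - ln ((y * X s - m * C s - D s) / (y - m)) + / 2 * ln (X s ^ 2 - 1)) t
    (- (y * X' - m * C' - D') / (y * X t - m * C t - D t) + X t * X' / (X t ^ 2 - 1)).
Proof.
  intros hX hC hD hX1 hN.
  assert (hy : y - m <> 0) by (intro e; rewrite e, Rdiv_0_r in hN; lra).
  assert (hN0 : y * X t - m * C t - D t <> 0) by (intro e; rewrite e, Rdiv_0_l in hN; lra).
  auto_derive.
  - repeat split; try (eexists; eassumption); [exact hN | nra].
  - rewrite (Derive_eta _ _ _ hX), (Derive_eta _ _ _ hC), (Derive_eta _ _ _ hD).
    field; repeat split; try assumption; nra.
Qed.

Lemma is_derive_Z_focus_shape (X C : R -> R) (t X' C' : R) :
  is_derive X t X' -> is_derive C t C' -> 1 < X t -> C t < X t ->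
  is_derive (fun s => - / 2 * ln (X s ^ 2 - 1) + ln (X s - C s)) t
    (- (X t * X' / (X t ^ 2 - 1)) + (X' - C') / (X t - C t)).
Proof.
  intros hX hC hX1 hCX; auto_derive.
  - repeat split; try (eexists; eassumption); nra.
  - rewrite (Derive_eta _ _ _ hX), (Derive_eta _ _ _ hC).
    field; repeat split; nra.
Qed.

Definition prolate_X_rho (m rho z : R) : R :=
  (rho / dist_y (- m) rho z + rho / dist_y m rho z) / (2 * m).
Definition prolate_C_rho (m rho z : R) : R :=
  (rho / dist_y (- m) rho z - rho / dist_y m rho z) / (2 * m).
Definition prolate_X_z (m rho z : R) : R :=
  ((z - - m) / dist_y (- m) rho z + (z - m) / dist_y m rho z) / (2 * m).
Definition prolate_C_z (m rho z : R) : R :=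
  ((z - - m) / dist_y (- m) rho z - (z - m) / dist_y m rho z) / (2 * m).

Lemma is_derive_prolate_rho m rho z : 0 < m -> 0 < rho ->
  is_derive (fun s => prolate_X m s z) rho (prolate_X_rho m rho z) /\
  is_derive (fun s => prolate_C m s z) rho (prolate_C_rho m rho z).
Proof.
  intros hm hrho; exact (is_derive_half_sum_diff _ _ m rho _ _ hm
    (is_derive_dist_y_rho (- m) rho z hrho) (is_derive_dist_y_rho m rho z hrho)).
Qed.

Lemma is_derive_prolate_z m rho z : 0 < m -> 0 < rho ->
  is_derive (fun t => prolate_X m rho t) z (prolate_X_z m rho z) /\
  is_derive (fun t => prolate_C m rho t) z (prolate_C_z m rho z).
Proof.
  intros hm hrho; exact (is_derive_half_sum_diff _ _ m z _ _ hm
    (is_derive_dist_y_z (- m) rho z hrho) (is_derive_dist_y_z m rho z hrho)).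
Qed.

Definition dU0_rho (m rho z : R) : R := prolate_X_rho m rho z / (prolate_X m rho z ^ 2 - 1).
Definition dU0_z (m rho z : R) : R := prolate_X_z m rho z / (prolate_X m rho z ^ 2 - 1).

(* [nsatz] handles neither [^] nor disequalities in the context. *)
Ltac nsatz_relations :=
  repeat match goal with H : ~ _ |- _ => clear H | H : _ < _ |- _ => clear H end;
  cbn [pow] in *; nsatz.

Ltac prolate_setup m y rho z :=
  pose proof (dist_y_sq (- m) rho z); pose proof (dist_y_sq m rho z); pose proof (dist_y_sq y rho z);
  pose proof (dist_y_pos (- m) rho z ltac:(assumption));
  pose proof (dist_y_pos m rho z ltac:(assumption));
  pose proof (dist_y_pos y rho z ltac:(assumption));
  pose proof (focal_sum_gt m rho z ltac:(assumption) ltac:(assumption));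
  unfold cosUps, sinUps, dU0_rho, dU0_z, prolate_X_rho, prolate_C_rho, prolate_X_z, prolate_C_z,
    prolate_X, prolate_C in *;
  set (a := dist_y (- m) rho z) in *; set (b := dist_y m rho z) in *; set (d := dist_y y rho z) in *.

Lemma eZ_numer_neq0 m y rho z : 0 < m -> 0 < rho -> y <> m ->
  y * (dist_y (- m) rho z + dist_y m rho z) - (dist_y (- m) rho z - dist_y m rho z) * m
  - dist_y y rho z * (m * 2) <> 0.
Proof.
  intros hm hrho hy e.
  pose proof (eZ_numer_div_pos m y _ _ hm (prolate_X_gt_1 m rho z hm hrho)
    (prolate_C_bound m rho z hm) hy) as hN.
  rewrite <- dist_y_prolate in hN by assumption; unfold prolate_X, prolate_C in hN.
  replace (_ - _ - _) with ((y * (dist_y (- m) rho z + dist_y m rho z)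
    - (dist_y (- m) rho z - dist_y m rho z) * m - dist_y y rho z * (m * 2)) / (2 * m)) in hN
    by (field; lra).
  rewrite e, !Rdiv_0_l in hN; lra.
Qed.

Lemma Z_rho_identity m y rho z : 0 < m -> 0 < rho -> y <> m ->
  - (y * prolate_X_rho m rho z - m * prolate_C_rho m rho z - rho / dist_y y rho z)
    / (y * prolate_X m rho z - m * prolate_C m rho z - dist_y y rho z)
  + prolate_X m rho z * prolate_X_rho m rho z / (prolate_X m rho z ^ 2 - 1)
  = cosUps y rho z * dU0_rho m rho z + sinUps y rho z * dU0_z m rho z.
Proof.
  intros hm hrho hy; pose proof (eZ_numer_neq0 m y rho z hm hrho hy).
  prolate_setup m y rho z.
  field_simplify_eq; [nsatz_relations | repeat split; try lra; nra].
Qed.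

Lemma Z_z_identity m y rho z : 0 < m -> 0 < rho -> y <> m ->
  - (y * prolate_X_z m rho z - m * prolate_C_z m rho z - (z - y) / dist_y y rho z)
    / (y * prolate_X m rho z - m * prolate_C m rho z - dist_y y rho z)
  + prolate_X m rho z * prolate_X_z m rho z / (prolate_X m rho z ^ 2 - 1)
  = cosUps y rho z * dU0_z m rho z + sinUps y rho z * - dU0_rho m rho z.
Proof.
  intros hm hrho hy; pose proof (eZ_numer_neq0 m y rho z hm hrho hy).
  prolate_setup m y rho z.
  field_simplify_eq; [nsatz_relations | repeat split; try lra; nra].
Qed.

Lemma Z_focus_rho_identity m rho z : 0 < m -> 0 < rho ->
  - (prolate_X m rho z * prolate_X_rho m rho z / (prolate_X m rho z ^ 2 - 1))
  + (prolate_X_rho m rho z - prolate_C_rho m rho z) / (prolate_X m rho z - prolate_C m rho z)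
  = cosUps m rho z * dU0_rho m rho z + sinUps m rho z * dU0_z m rho z.
Proof.
  intros hm hrho; prolate_setup m m rho z.
  field_simplify_eq; [nsatz_relations | repeat split; try lra; nra].
Qed.

Lemma Z_focus_z_identity m rho z : 0 < m -> 0 < rho ->
  - (prolate_X m rho z * prolate_X_z m rho z / (prolate_X m rho z ^ 2 - 1))
  + (prolate_X_z m rho z - prolate_C_z m rho z) / (prolate_X m rho z - prolate_C m rho z)
  = cosUps m rho z * dU0_z m rho z + sinUps m rho z * - dU0_rho m rho z.
Proof.
  intros hm hrho; prolate_setup m m rho z.
  field_simplify_eq; [nsatz_relations | repeat split; try lra; nra].
Qed.

Lemma is_derive_Z_prolate_rho m y rho z : 0 < m -> 0 < rho ->
  is_derive (fun s => Z_prolate m y s z) rho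
    (cosUps y rho z * dU0_rho m rho z + sinUps y rho z * dU0_z m rho z).
Proof.
  intros hm hrho.
  pose proof (prolate_X_gt_1 m rho z hm hrho) as hX; pose proof (prolate_C_bound m rho z hm) as hC.
  destruct (is_derive_prolate_rho m rho z hm hrho) as [dX dC].
  assert (near_rho : locally rho (fun s => 0 < s)) by exact (open_gt 0 rho hrho).
  destruct (Req_dec_T y m) as [-> | hy].
  - rewrite <- (Z_focus_rho_identity m rho z hm hrho).
    apply (is_derive_ext_loc (fun s => - / 2 * ln (prolate_X m s z ^ 2 - 1)
                                       + ln (prolate_X m s z - prolate_C m s z))).
    + apply (filter_imp _ _ (fun s hs => eq_sym (Z_prolate_split_focus m s z hm hs)) near_rho).
    + apply (is_derive_Z_focus_shape (fun s => prolate_X m s z) (fun s => prolate_C m s z));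
        auto; lra.
  - rewrite <- (Z_rho_identity m y rho z hm hrho hy).
    apply (is_derive_ext_loc (fun s => - ln ((y * prolate_X m s z - m * prolate_C m s z
                                              - dist_y y s z) / (y - m))
                                       + / 2 * ln (prolate_X m s z ^ 2 - 1))).
    + apply (filter_imp _ _ (fun s hs => eq_sym (Z_prolate_split m y s z hm hs hy)) near_rho).
    + apply (is_derive_Z_shape (fun s => prolate_X m s z) (fun s => prolate_C m s z)
               (fun s => dist_y y s z)); auto using is_derive_dist_y_rho.
      rewrite (dist_y_prolate m y rho z hm); exact (eZ_numer_div_pos m y _ _ hm hX hC hy).
Qed.

Lemma is_derive_Z_prolate_z m y rho z : 0 < m -> 0 < rho ->
  is_derive (fun t => Z_prolate m y rho t) z
    (cosUps y rho z * dU0_z m rho z + sinUps y rho z * - dU0_rho m rho z).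
Proof.
  intros hm hrho.
  pose proof (prolate_X_gt_1 m rho z hm hrho) as hX; pose proof (prolate_C_bound m rho z hm) as hC.
  destruct (is_derive_prolate_z m rho z hm hrho) as [dX dC].
  destruct (Req_dec_T y m) as [-> | hy].
  - rewrite <- (Z_focus_z_identity m rho z hm hrho).
    apply (is_derive_ext (fun t => - / 2 * ln (prolate_X m rho t ^ 2 - 1)
                                   + ln (prolate_X m rho t - prolate_C m rho t))).
    + intros t; symmetry; apply Z_prolate_split_focus; assumption.
    + apply (is_derive_Z_focus_shape (fun t => prolate_X m rho t) (fun t => prolate_C m rho t));
        auto; lra.
  - rewrite <- (Z_z_identity m y rho z hm hrho hy).
    apply (is_derive_ext (fun t => - ln ((y * prolate_X m rho t - m * prolate_C m rho t
                                          - dist_y y rho t) / (y - m))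
                                   + / 2 * ln (prolate_X m rho t ^ 2 - 1))).
    + intros t; symmetry; apply Z_prolate_split; assumption.
    + apply (is_derive_Z_shape (fun t => prolate_X m rho t) (fun t => prolate_C m rho t)
               (fun t => dist_y y rho t)); auto using is_derive_dist_y_z.
      rewrite (dist_y_prolate m y rho z hm); exact (eZ_numer_div_pos m y _ _ hm hX hC hy).
Qed.

Lemma Derive_U0 m (U0 : R -> R -> R) rho z : 0 < m ->
  (forall r th, 2 * m < r -> 0 <= th <= PI ->
     U0 (weyl_rho m r th) (weyl_z m r th) = / 2 * ln (1 - 2 * m / r)) ->
  0 < rho ->
  Derive (fun s => U0 s z) rho = dU0_rho m rho z /\
  Derive (fun t => U0 rho t) z = dU0_z m rho z.
Proof.
  intros hm hU hrho.
  pose proof (prolate_X_gt_1 m rho z hm hrho) as hX.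
  destruct (is_derive_prolate_rho m rho z hm hrho) as [dXr _].
  destruct (is_derive_prolate_z m rho z hm hrho) as [dXz _].
  split; apply is_derive_unique.
  - apply (is_derive_ext_loc (fun s => / 2 * ln ((prolate_X m s z - 1) / (prolate_X m s z + 1)))).
    + apply (filter_imp _ _ (fun s hs => eq_sym (U0_prolate m U0 s z hm hU hs)) (open_gt 0 rho hrho)).
    + exact (is_derive_half_ln_ratio (fun s => prolate_X m s z) rho _ dXr hX).
  - apply (is_derive_ext (fun t => / 2 * ln ((prolate_X m rho t - 1) / (prolate_X m rho t + 1)))).
    + intros t; symmetry; apply U0_prolate; assumption.
    + exact (is_derive_half_ln_ratio (fun t => prolate_X m rho t) z _ dXz hX).
Qed.

(** * Decay at infinity *)

Lemma prolate_dist_asymptote m y X C : 0 < m -> 1 < X -> -1 <= C <= 1 ->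
  Rabs (m * X - prolate_dist m y X C) <= 2 * Rabs y + m + y ^ 2 / m.
Proof.
  intros hm hX hC.
  pose proof (prolate_dist_sq m y X C ltac:(lra) hC) as hD2.
  pose proof (sqrt_pos (m ^ 2 * X ^ 2 + y ^ 2 - 2 * m * X * y * C - m ^ 2 * (1 - C ^ 2))) as hD.
  fold (prolate_dist m y X C) in hD |- *; set (D := prolate_dist m y X C) in *.
  set (K := 2 * Rabs y + m + y ^ 2 / m).
  assert (hyC : Rabs (y * C) <= Rabs y).
  { rewrite Rabs_mult; pose proof (Rabs_pos y); assert (Rabs C <= 1) by (apply Rabs_le; lra); nra. }
  assert (hE : Rabs (m * X - D) * (m * X + D) = Rabs (- y ^ 2 + 2 * m * X * (y * C) + m ^ 2 * (1 - C ^ 2))).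
  { rewrite <- (Rabs_right (m * X + D)) at 1 by nra; rewrite <- Rabs_mult; f_equal.
    replace ((m * X - D) * (m * X + D)) with (m ^ 2 * X ^ 2 - D ^ 2) by ring; rewrite hD2; ring. }
  assert (hEK : Rabs (- y ^ 2 + 2 * m * X * (y * C) + m ^ 2 * (1 - C ^ 2)) <= m * X * K).
  { unfold K; apply Rabs_le.
    pose proof (Rle_abs (y * C)); pose proof (Rle_abs (- (y * C))); rewrite Rabs_Ropp in *.
    assert (y ^ 2 <= X * y ^ 2) by (pose proof (pow2_ge_0 y); nra).
    replace (m * X * (2 * Rabs y + m + y ^ 2 / m)) with (2 * m * X * Rabs y + m ^ 2 * X + X * y ^ 2)
      by (field; lra).
    assert (0 <= m * X * (Rabs y - y * C)) by (apply Rmult_le_pos; nra).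
    assert (0 <= m * X * (Rabs y + y * C)) by (apply Rmult_le_pos; nra).
    assert (0 <= m ^ 2 * (1 - C ^ 2) <= m ^ 2 * X) by (split; [apply Rmult_le_pos|]; nra).
    split; nra. }
  assert (0 <= K).
  { pose proof (Rabs_pos y); assert (0 <= y ^ 2 / m) by (apply Rdiv_le_0_compat; [apply pow2_ge_0 | lra]).
    unfold K; lra. }
  apply (Rmult_le_reg_r (m * X + D)); [nra|].
  rewrite hE; apply (Rle_trans _ _ _ hEK); nra.
Qed.

Lemma eZ_prolate_near_1 m y : 0 < m -> exists K, 0 <= K /\
  forall X C, 1 < X -> -1 <= C <= 1 -> Rabs (eZ_prolate m y X C - 1) <= K / (X - 1).
Proof.
  intros hm; unfold eZ_prolate; destruct (Req_dec_T y m) as [_ | hy].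
  - exists 2; split; [lra|]; intros X C hX hC.
    pose proof (sqrt_X2_bounds X hX).
    replace (_ - 1) with ((sqrt (X ^ 2 - 1) - X + C) / (X - C)) by (field; lra).
    apply Rabs_div_le; [apply Rabs_le; lra | rewrite Rabs_right; lra].
  - set (Kd := 2 * Rabs y + m + y ^ 2 / m).
    assert (hKd : 0 <= Kd).
    { pose proof (Rabs_pos y); assert (0 <= y ^ 2 / m) by (apply Rdiv_le_0_compat; [apply pow2_ge_0 | lra]).
      unfold Kd; lra. }
    assert (hym : 0 < Rabs (y - m)) by (apply Rabs_pos_lt; lra).
    exists ((Rabs (y - m) + Kd + m) / Rabs (y - m)); split.
    { apply Rdiv_le_0_compat; lra. }
    intros X C hX hC.
    pose proof (sqrt_X2_bounds X hX); pose proof (sqrt_X2_pos X hX).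
    pose proof (prolate_dist_asymptote m y X C hm hX hC) as hD; fold Kd in hD.
    set (s := sqrt (X ^ 2 - 1)) in *; set (D := prolate_dist m y X C) in *.
    replace (_ - 1) with (((y - m) * (X - s) + (m * X - D) - m * C) / ((y - m) * s))
      by (field; split; lra).
    replace (_ / _ / _) with ((Rabs (y - m) + Kd + m) / (Rabs (y - m) * (X - 1))) by (field; lra).
    apply Rabs_div_le.
    + assert (Rabs ((y - m) * (X - s)) <= Rabs (y - m)).
      { rewrite Rabs_mult, (Rabs_right (X - s)) by lra; nra. }
      assert (Rabs (m * C) <= m).
      { rewrite Rabs_mult, Rabs_right by lra; assert (Rabs C <= 1) by (apply Rabs_le; lra); nra. }
      replace (_ + _ - _) with ((y - m) * (X - s) + (m * X - D) + - (m * C)) by ring.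
      pose proof (Rabs_triang ((y - m) * (X - s) + (m * X - D)) (- (m * C))).
      pose proof (Rabs_triang ((y - m) * (X - s)) (m * X - D)); rewrite Rabs_Ropp in *; lra.
    + rewrite Rabs_mult, (Rabs_right s) by lra; split; [nra|].
      apply Rmult_le_compat_l; lra.
Qed.

Lemma Z_prolate_vanishes_at_infinity m r0 y : 0 < m -> 2 * m < r0 ->
  forall eps, 0 < eps -> exists M, forall rho z, exterior m r0 rho z ->
    M < rho ^ 2 + z ^ 2 -> Rabs (Z_prolate m y rho z) < eps.
Proof.
  intros hm hr0 eps he.
  destruct (ln_near_1 eps he) as (delta & hdelta & hln).
  destruct (eZ_prolate_near_1 m y hm) as (K & hK & hbound).
  exists ((m + m * (K / delta)) ^ 2); intros rho z (r & th & hr & _ & -> & ->) hM.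
  pose proof (weyl_norm_sq_le m r th hm ltac:(lra)).
  assert (hx1 : 0 <= K / delta) by (apply Rdiv_le_0_compat; lra).
  assert (hfar : m + m * (K / delta) < r - m) by (apply Rsqr_incrst_0; unfold Rsqr; nra).
  unfold Z_prolate; destruct (prolate_weyl m r th hm ltac:(lra)) as [-> ->].
  rewrite Rabs_Ropp; apply hln.
  assert (hx : K / delta < r / m - 1 - 1).
  { apply (Rmult_lt_reg_l m); [lra|]; replace (m * (r / m - 1 - 1)) with (r - m - m) by (field; lra).
    lra. }
  assert (hKx : K < delta * (r / m - 1 - 1)).
  { replace K with (delta * (K / delta)) at 1 by (field; lra); apply Rmult_lt_compat_l; lra. }
  eapply Rle_lt_trans; [apply hbound; [lra | apply COS_bound]|].
  unfold Rdiv; apply (Rmult_lt_reg_r (r / m - 1 - 1)); [lra|].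
  rewrite Rmult_assoc, Rinv_l, Rmult_1_r by lra; lra.
Qed.

Lemma Z_prolate_is_Zsol m r0 (U0 : R -> R -> R) y : 0 < m -> 2 * m < r0 ->
  (forall r th, 2 * m < r -> 0 <= th <= PI ->
     U0 (weyl_rho m r th) (weyl_z m r th) = / 2 * ln (1 - 2 * m / r)) ->
  is_Zsol m r0 U0 y (Z_prolate m y).
Proof.
  intros hm hr0 hU; split.
  - intros rho z _ hrho; destruct (Derive_U0 m U0 rho z hm hU hrho) as [e1 e2].
    unfold fadd, fscal, hstar, dfun; simpl; rewrite e1, e2.
    split; [apply is_derive_Z_prolate_rho | apply is_derive_Z_prolate_z]; assumption.
  - apply Z_prolate_vanishes_at_infinity; assumption.
Qed.

(** * Uniqueness *)

(* Join both points horizontally to a far vertical line and move along that line. *)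
Lemma partials_0_const (E : R -> R -> Prop) (F : R -> R -> R) R0 :
  (forall rho rho' z, E rho z -> rho <= rho' -> E rho' z) ->
  (forall rho z, R0 <= rho -> E rho z) ->
  (forall rho z, E rho z -> is_derive (fun s => F s z) rho 0 /\ is_derive (fun t => F rho t) z 0) ->
  forall r1 z1 r2 z2, E r1 z1 -> E r2 z2 -> F r1 z1 = F r2 z2.
Proof.
  intros hmono hfar hF r1 z1 r2 z2 h1 h2.
  set (rs := Rmax R0 (Rmax r1 r2)).
  assert (hrs : R0 <= rs /\ r1 <= rs /\ r2 <= rs).
  { unfold rs; pose proof (Rmax_l R0 (Rmax r1 r2)); pose proof (Rmax_r R0 (Rmax r1 r2));
      pose proof (Rmax_l r1 r2); pose proof (Rmax_r r1 r2); lra. }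
  assert (horiz : forall r z, E r z -> r <= rs -> F r z = F rs z).
  { intros r z hE hr; apply (const_of_derive_0 (fun s => F s z)); intros x hx.
    rewrite Rmin_left, Rmax_right in hx by lra.
    apply (proj1 (hF x z (hmono r x z hE ltac:(lra)))). }
  rewrite (horiz r1 z1 h1 ltac:(lra)), (horiz r2 z2 h2 ltac:(lra)).
  apply (const_of_derive_0 (fun t => F rs t)); intros x _.
  apply (proj2 (hF rs x (hfar rs x ltac:(lra)))).
Qed.

Lemma Zsol_unique m r0 (U0 Z1 Z2 : R -> R -> R) y : 0 < m -> 2 * m < r0 ->
  is_Zsol m r0 U0 y Z1 -> is_Zsol m r0 U0 y Z2 ->
  forall rho z, exterior m r0 rho z -> 0 < rho -> Z1 rho z = Z2 rho z.
Proof.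
  intros hm hr0 [hd1 hinf1] [hd2 hinf2] rho z hext hrho.
  set (E := fun a b => exterior m r0 a b /\ 0 < a).
  assert (hmono : forall a a' b, E a b -> a <= a' -> E a' b).
  { intros a a' b [hx ha] haa; split; [|lra]; apply exterior_iff in hx; try assumption.
    apply exterior_iff; [assumption | assumption | lra|].
    pose proof (dist_y_le_mono (- m) a a' b ltac:(lra)); pose proof (dist_y_le_mono m a a' b ltac:(lra)).
    unfold prolate_X in *; apply (Rlt_le_trans _ _ _ hx), Rmult_le_compat_l; [lra|].
    apply Rplus_le_compat_r, Rmult_le_compat_r; [left; apply Rinv_0_lt_compat|]; lra. }
  assert (hfar : forall a b, r0 <= a -> E a b).
  { intros a b ha; split; [|lra]; apply exterior_iff; try lra; unfold prolate_X.
    pose proof (dist_y_ge_rho (- m) a b ltac:(lra)); pose proof (dist_y_ge_rho m a b ltac:(lra)).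
    replace (m * ((dist_y (- m) a b + dist_y m a b) / (2 * m) + 1))
      with (m + (dist_y (- m) a b + dist_y m a b) / 2) by (field; lra); lra. }
  assert (hconst : forall a b, E a b -> Z1 a b - Z2 a b = Z1 rho z - Z2 rho z).
  { intros a b hab; apply (partials_0_const E (fun a b => Z1 a b - Z2 a b) r0 hmono hfar);
      [| assumption | split; assumption].
    intros a1 b1 [hx hpos]; destruct (hd1 a1 b1 hx hpos), (hd2 a1 b1 hx hpos).
    split; eapply is_derive_sub_eq; eassumption. }
  (* the constant difference is smaller than any eps, by evaluating it far out on z = 0 *)
  apply Rminus_diag_uniq; destruct (Req_dec (Z1 rho z - Z2 rho z) 0) as [| hne]; [assumption|].
  exfalso; set (eps := Rabs (Z1 rho z - Z2 rho z) / 2).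
  assert (heps : 0 < eps) by (apply Rdiv_lt_0_compat; [apply Rabs_pos_lt|]; lra).
  destruct (hinf1 eps heps) as [M1 hM1]; destruct (hinf2 eps heps) as [M2 hM2].
  set (R0 := Rmax (Rmax r0 1) (Rmax M1 M2) + 1).
  assert (hR0 : r0 < R0 /\ 1 < R0 /\ M1 < R0 /\ M2 < R0).
  { unfold R0; pose proof (Rmax_l (Rmax r0 1) (Rmax M1 M2)); pose proof (Rmax_r (Rmax r0 1) (Rmax M1 M2)).
    pose proof (Rmax_l r0 1); pose proof (Rmax_r r0 1); pose proof (Rmax_l M1 M2); pose proof (Rmax_r M1 M2).
    lra. }
  destruct (hfar R0 0 ltac:(lra)) as [hx0 _].
  specialize (hM1 R0 0 hx0 ltac:(nra)); specialize (hM2 R0 0 hx0 ltac:(nra)).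
  pose proof (hconst R0 0 (hfar R0 0 ltac:(lra))) as hF.
  pose proof (Rabs_triang (Z1 R0 0) (- Z2 R0 0)) as htri; rewrite Rabs_Ropp in htri.
  fold (Rminus (Z1 R0 0) (Z2 R0 0)) in htri; rewrite hF in htri.
  unfold eps in *; lra.
Qed.

(** * The closed forms and the limit [y -> m] *)

Definition Psi_prolate (m y X C : R) : R :=
  (X - 1) / (X + 1) * eZ_prolate m y X C ^ 2 / prolate_dist m y X C.

Lemma eZ_formula_prolate m y x th : y <> m ->
  eZ_formula m y x th = eZ_prolate m y x (cos th).
Proof.
  intros hy; unfold eZ_formula, Nxy, eZ_prolate; rewrite Dxy_prolate.
  destruct (Req_dec_T y m); [contradiction | reflexivity].
Qed.

Lemma Psi_formula_prolate m y x th : 0 < m -> 1 < x -> 0 < th < PI -> y <> m ->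
  Psi_formula m y x th = Psi_prolate m y x (cos th).
Proof.
  intros hm hx hth hy.
  pose proof (prolate_dist_pos m y x (cos th) hm hx (cos_open_bound th hth)).
  pose proof (sqrt_X2_pos x hx); pose proof (pow2_sqrt (x ^ 2 - 1) ltac:(nra)) as hs2.
  unfold Psi_formula, Psi_prolate, eZ_prolate, Nxy; rewrite Dxy_prolate.
  destruct (Req_dec_T y m) as [e | _]; [contradiction|].
  set (s := sqrt (x ^ 2 - 1)) in *; set (D := prolate_dist m y x (cos th)) in *.
  set (N := y * x - m * cos th - D).
  replace ((N / ((y - m) * s)) ^ 2) with (N ^ 2 / ((y - m) ^ 2 * (x ^ 2 - 1)))
    by (rewrite <- hs2; field; lra).
  field; repeat split; try lra; nra.
Qed.

Lemma near_punctured_pos m : 0 < m -> Rbar_locally' m (fun y' => - m < y' /\ y' <> m).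
Proof.
  intros hm; exists (mkposreal m hm); intros y' hb hne; split; [|assumption].
  change (Rabs (y' - m) < m) in hb; apply Rabs_lt_between' in hb; lra.
Qed.

(* At [y = m] the radicand of [prolate_dist] is the square [(m (X - C))^2]. *)
Ltac focus_sqrt m X C :=
  repeat match goal with
  | |- context [sqrt ?u] => replace u with ((m * (X - C)) ^ 2) by ring; rewrite sqrt_pow2 by nra
  | |- 0 < ?u => replace u with ((m * (X - C)) ^ 2) by ring; apply pow_lt; nra
  end.

Lemma eZ_formula_lim m x th : 0 < m -> 1 < x -> 0 < th < PI ->
  is_lim (fun y' => eZ_formula m y' x th) m (eZ_prolate m m x (cos th)).
Proof.
  intros hm hx hth; pose proof (COS_bound th) as hc.
  pose proof (eZ_conj_denom_pos m m x (cos th) hm hx hc ltac:(lra)) as hQ.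
  set (g := fun y' => (y' + m) * sqrt (x ^ 2 - 1)
                      / (y' * x - m * cos th + prolate_dist m y' x (cos th))).
  apply (is_lim_ext_loc g).
  - apply (filter_imp _ _ (fun y' hy' => eq_sym (eq_trans (eZ_formula_prolate m y' x th (proj2 hy'))
      (eZ_prolate_conj m y' x (cos th) hm hx hc (proj1 hy')))) (near_punctured_pos m hm)).
  - rewrite (eZ_prolate_conj m m x (cos th) hm hx hc ltac:(lra)); change (is_lim g m (g m)).
    apply is_lim_continuity, continuity_pt_ex_derive; unfold g, prolate_dist in *.
    auto_derive; repeat split; focus_sqrt m x (cos th); nra.
Qed.

Lemma Psi_formula_lim m x th : 0 < m -> 1 < x -> 0 < th < PI ->
  is_lim (fun y' => Psi_formula m y' x th) m (Psi_prolate m m x (cos th)).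
Proof.
  intros hm hx hth; pose proof (COS_bound th) as hc.
  pose proof (eZ_conj_denom_pos m m x (cos th) hm hx hc ltac:(lra)) as hQ.
  pose proof (prolate_dist_pos m m x (cos th) hm hx (cos_open_bound th hth)) as hD.
  set (h := fun y' => (x - 1) / (x + 1) * ((y' + m) * sqrt (x ^ 2 - 1)
                      / (y' * x - m * cos th + prolate_dist m y' x (cos th))) ^ 2
                      / prolate_dist m y' x (cos th)).
  apply (is_lim_ext_loc h).
  - eapply filter_imp; [| apply (near_punctured_pos m hm)]; intros y' [hy1 hy2].
    rewrite Psi_formula_prolate by assumption; unfold Psi_prolate.
    rewrite eZ_prolate_conj by assumption; reflexivity.
  - unfold Psi_prolate; rewrite (eZ_prolate_conj m m x (cos th) hm hx hc ltac:(lra)).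
    change (is_lim h m (h m)).
    apply is_lim_continuity, continuity_pt_ex_derive; unfold h, prolate_dist in *.
    auto_derive; repeat split; focus_sqrt m x (cos th); nra.
Qed.

Lemma exp_neg_Z_prolate_weyl m y r th : 0 < m -> 2 * m < r ->
  exp (- Z_prolate m y (weyl_rho m r th) (weyl_z m r th)) = eZ_prolate m y (r / m - 1) (cos th).
Proof.
  intros hm hr; unfold Z_prolate; destruct (prolate_weyl m r th hm hr) as [-> ->].
  rewrite Ropp_involutive; apply exp_ln, eZ_prolate_pos; [assumption | | apply COS_bound].
  apply (Rmult_lt_reg_r m); [lra|]; field_simplify; lra.
Qed.

Lemma Psi_weyl m (U0 Z : R -> R -> R) y r th : 0 < m -> 2 * m < r -> 0 <= th <= PI ->
  (forall r th, 2 * m < r -> 0 <= th <= PI ->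
     U0 (weyl_rho m r th) (weyl_z m r th) = / 2 * ln (1 - 2 * m / r)) ->
  Z (weyl_rho m r th) (weyl_z m r th) = Z_prolate m y (weyl_rho m r th) (weyl_z m r th) ->
  Psi U0 Z y (weyl_rho m r th) (weyl_z m r th) = Psi_prolate m y (r / m - 1) (cos th).
Proof.
  intros hm hr hth hU hZ; pose proof (one_sub_2m_div_pos m r hm hr).
  unfold Psi, Psi_prolate; rewrite hU, hZ, dist_y_weyl, Dxy_prolate by assumption.
  pose proof (exp_neg_Z_prolate_weyl m y r th hm hr) as he.
  set (Zp := Z_prolate m y (weyl_rho m r th) (weyl_z m r th)) in *.
  replace (2 * (/ 2 * ln (1 - 2 * m / r)) - 2 * Zp) with (ln (1 - 2 * m / r) + (- Zp + - Zp))
    by field.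
  rewrite !exp_plus, exp_ln, he by assumption.
  f_equal; field; lra.
Qed.

Theorem mainTheorem10 (m r0 : R) (U0 : R -> R -> R) :
  0 < m -> 2 * m < r0 ->
  (forall r th, 2 * m < r -> 0 <= th <= PI ->
     U0 (weyl_rho m r th) (weyl_z m r th) = / 2 * ln (1 - 2 * m / r)) ->
  forall y : R, - (m * (r0 / m - 1)) < y < m * (r0 / m - 1) ->
  (exists Z, is_Zsol m r0 U0 y Z) /\
  (forall Z, is_Zsol m r0 U0 y Z ->
   forall r th, r0 < r -> 0 < th < PI ->
     (y <> m ->
        exp (- Z (weyl_rho m r th) (weyl_z m r th)) = eZ_formula m y (r / m - 1) th /\
        Psi U0 Z y (weyl_rho m r th) (weyl_z m r th) = Psi_formula m y (r / m - 1) th) /\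
     (y = m ->
        is_lim (fun y' => eZ_formula m y' (r / m - 1) th) m
               (exp (- Z (weyl_rho m r th) (weyl_z m r th))) /\
        is_lim (fun y' => Psi_formula m y' (r / m - 1) th) m
               (Psi U0 Z y (weyl_rho m r th) (weyl_z m r th))) /\
     psi y (weyl_rho m r th) (weyl_z m r th) = psi_formula m y (r / m - 1) th).
Proof.
  intros hm hr0 hU y _.
  pose proof (Z_prolate_is_Zsol m r0 U0 y hm hr0 hU) as hsol.
  split; [exists (Z_prolate m y); exact hsol|].
  intros Z hZ r th hr hth.
  assert (hx : 1 < r / m - 1) by (apply (Rmult_lt_reg_r m); [lra|]; field_simplify; lra).
  assert (hext : exterior m r0 (weyl_rho m r th) (weyl_z m r th)).
  { exists r, th; repeat split; lra. }
  pose proof (Zsol_unique m r0 U0 Z (Z_prolate m y) y hm hr0 hZ hsol _ _ hext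
    (weyl_rho_pos m r th hm ltac:(lra) hth)) as hZp.
  rewrite (Psi_weyl m U0 Z y r th hm ltac:(lra) ltac:(lra) hU hZp), hZp,
    exp_neg_Z_prolate_weyl by lra.
  split; [|split].
  - intros hy; rewrite eZ_formula_prolate, Psi_formula_prolate by assumption; split; reflexivity.
  - intros ->; split; [apply eZ_formula_lim | apply Psi_formula_lim]; assumption.
  - unfold psi, psi_formula; rewrite dist_y_weyl by lra; reflexivity.
Qed.
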